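(* Let $T$ be a $\delta$-Jordan Lie supertriple system, $\psi:T\times T\times T\to T$ an even trilinear map, and for a formal variable $\lambda$ let $T_\lambda$ denote $T$ with the product $[x_1,x_2,x_3]_\lambda=[x_1,x_2,x_3]+\lambda\psi(x_1,x_2,x_3)$. Then $T_\lambda$ is a $\delta$-Jordan Lie supertriple system if and only if (i) $\psi$ itself defines a $\delta$-Jordan Lie supertriple system structure on $T$, and (ii) $\psi$ is a 3-cocycle of $T$, i.e. $d^3\psi=0$.
   Context: A $\delta$-Jordan Lie supertriple system ($\delta\in\{1,-1\}$) is a $\mathbb{Z}_2$-graded vector space $T$ with a trilinear product $[\cdot,\cdot,\cdot]$ such that, for all homogeneous $a,b,c,d,e$ (with $|a|$ the degree of $a$): $|[a,b,c]|=|a|+|b|+|c|$; $[b,a,c]=-\delta(-1)^{|a||b|}[a,b,c]$; $(-1)^{|a||c|}[a,b,c]+(-1)^{|b||a|}[b,c,a]+(-1)^{|c||b|}[c,a,b]=0$; and $[a,b,[c,d,e]]=[[a,b,c],d,e]+(-1)^{|c|(|a|+|b|)}[c,[a,b,d],e]+\delta(-1)^{(|a|+|b|)(|c|+|d|)}[c,d,[a,b,e]]$. ''$T_\lambda$ is a $\delta$-Jordan Lie supertriple system'' means these identities hold for $[\cdot,\cdot,\cdot]_\lambda$ identically in $\lambda$. With the adjoint representation $\theta(a,b)(x)=(-1)^{|x|(|a|+|b|)}[x,a,b]$, $D(a,b)(x)=\delta[a,b,x]$, and for a trilinear map $f$ of degree $|f|$ (here $|\psi|=0$): $d^{3}f(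x_1,\dots,x_5)=(-1)^{(|f|+|x_1|+|x_2|+|x_3|)(|x_4|+|x_5|)}\theta(x_4,x_5)f(x_1,x_2,x_3)-\delta(-1)^{(|f|+|x_1|+|x_2|)(|x_3|+|x_5|)+|x_4||x_5|}\theta(x_3,x_5)f(x_1,x_2,x_4)-\delta(-1)^{|f|(|x_1|+|x_2|)}D(x_1,x_2)f(x_3,x_4,x_5)+(-1)^{(|f|+|x_1|+|x_2|)(|x_3|+|x_4|)}D(x_3,x_4)f(x_1,x_2,x_5)+f([x_1,x_2,x_3],x_4,x_5)-f(x_1,x_2,[x_3,x_4,x_5])+(-1)^{|x_3|(|x_1|+|x_2|)}f(x_3,[x_1,x_2,x_4],x_5)+\delta(-1)^{(|x_1|+|x_2|)(|x_3|+|x_4|)}f(x_3,x_4,[x_1,x_2,x_5])$ for homogeneous $x_i$. *)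

From HB Require Import structures.
From mathcomp Require Import all_boot all_order all_algebra.
From mathcomp Require Import functions.
Set Implicit Arguments. Unset Strict Implicit. Unset Printing Implicit Defensive.
Import Order.TTheory GRing.Theory Num.Theory.
Local Open Scope ring_scope.

(* Degrees live in Z_2 = bool (addition = xor, product = &&). *)
Definition sgn (K : pzRingType) (b : bool) : K := (-1) ^+ b.

Section Defs.
Variables (K : fieldType).

Definition subspace_pred (V : lmodType K) (P : {pred V}) : Prop :=
  0 \in P /\ forall (a : K) (x y : V), x \in P -> y \in P -> a *: x + y \in P.

Definition Z2grading (V : lmodType K) (V0 V1 : {pred V}) : Prop :=
  [/\ subspace_pred V0, subspace_pred V1,
      (forall v : V, exists2 v0, v0 \in V0 & exists2 v1, v1 \in V1 & v = v0 + v1)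
    & (forall v : V, v \in V0 -> v \in V1 -> v = 0)].

Definition homog (V : lmodType K) (V0 V1 : {pred V}) (d : bool) (x : V) : Prop :=
  x \in (if d then V1 else V0).

Definition trilinear (V : lmodType K) (f : V -> V -> V -> V) : Prop :=
  [/\ forall (a : K) x x' y z, f (a *: x + x') y z = a *: f x y z + f x' y z,
      forall (a : K) x y y' z, f x (a *: y + y') z = a *: f x y z + f x y' z
    & forall (a : K) x y z z', f x y (a *: z + z') = a *: f x y z + f x y z'].

Definition jlsts_identities (W : lmodType K) (hom : bool -> W -> Prop)
    (delta : K) (br : W -> W -> W -> W) : Prop :=
  (forall (da db dc : bool) a b c, hom da a -> hom db b -> hom dc c ->
     hom (da (+) db (+) dc) (br a b c)) /\
  (forall (da db dc : bool) a b c, hom da a -> hom db b -> hom dc c ->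
     br b a c = - (delta * sgn K (da && db)) *: br a b c) /\
  (forall (da db dc : bool) a b c, hom da a -> hom db b -> hom dc c ->
     sgn K (da && dc) *: br a b c + sgn K (db && da) *: br b c a
       + sgn K (dc && db) *: br c a b = 0) /\
  (forall (da db dc dd de : bool) a b c d e,
     hom da a -> hom db b -> hom dc c -> hom dd d -> hom de e ->
     br a b (br c d e) =
       br (br a b c) d e
       + sgn K (dc && (da (+) db)) *: br c (br a b d) e
       + (delta * sgn K ((da (+) db) && (dc (+) dd))) *: br c d (br a b e)).

Definition is_JLSTS (V : lmodType K) (V0 V1 : {pred V}) (delta : K)
    (br : V -> V -> V -> V) : Prop :=
  trilinear br /\ jlsts_identities (homog V0 V1) delta br.

Definition even_map (V : lmodType K) (V0 V1 : {pred V}) (f : V -> V -> V -> V) :=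
  forall (d1 d2 d3 : bool) x y z, homog V0 V1 d1 x -> homog V0 V1 d2 y ->
    homog V0 V1 d3 z -> homog V0 V1 (d1 (+) d2 (+) d3) (f x y z).

(* ---- The deformation T_lambda, lambda a formal variable. ----
   Elements of T[[lambda]] are coefficient sequences p : nat -> V
   (p n = coefficient of lambda^n); the product of T is extended
   K[[lambda]]-trilinearly (Cauchy product), and
   [x,y,z]_lambda = [x,y,z] + lambda psi(x,y,z). *)
Definition ext3 (V : lmodType K) (f : V -> V -> V -> V)
    (p q r : nat -> V) (n : nat) : V :=
  \sum_(i < n.+1) \sum_(j < (n - i).+1) f (p i) (q j) (r (n - i - j)%N).

Definition br_lambda (V : lmodType K) (br psi : V -> V -> V -> V)
    (p q r : nat -> V) : nat -> V :=
  fun n => ext3 br p q r n + (if n is m.+1 then ext3 psi p q r m else 0).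

Definition homog_lambda (V : lmodType K) (V0 V1 : {pred V}) (d : bool)
    (p : nat -> V) : Prop := forall n, homog V0 V1 d (p n).

Definition theta (V : lmodType K) (br : V -> V -> V -> V)
    (da db : bool) (a b : V) (dx : bool) (x : V) : V :=
  sgn K (dx && (da (+) db)) *: br x a b.
Definition Dop (V : lmodType K) (delta : K) (br : V -> V -> V -> V)
    (a b x : V) : V := delta *: br a b x.

Definition d3 (V : lmodType K) (delta : K) (br f : V -> V -> V -> V)
    (df d1 d2 d3 d4 d5 : bool) (x1 x2 x3 x4 x5 : V) : V :=
    sgn K ((df (+) d1 (+) d2 (+) d3) && (d4 (+) d5)) *:
      theta br d4 d5 x4 x5 (df (+) d1 (+) d2 (+) d3) (f x1 x2 x3)
  - (delta * sgn K (((df (+) d1 (+) d2) && (d3 (+) d5)) (+) (d4 && d5))) *: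
      theta br d3 d5 x3 x5 (df (+) d1 (+) d2 (+) d4) (f x1 x2 x4)
  - (delta * sgn K (df && (d1 (+) d2))) *: Dop delta br x1 x2 (f x3 x4 x5)
  + sgn K ((df (+) d1 (+) d2) && (d3 (+) d4)) *: Dop delta br x3 x4 (f x1 x2 x5)
  + f (br x1 x2 x3) x4 x5
  - f x1 x2 (br x3 x4 x5)
  + sgn K (d3 && (d1 (+) d2)) *: f x3 (br x1 x2 x4) x5
  + (delta * sgn K ((d1 (+) d2) && (d3 (+) d4))) *: f x3 x4 (br x1 x2 x5).

Definition cocycle3 (V : lmodType K) (V0 V1 : {pred V}) (delta : K)
    (br psi : V -> V -> V -> V) : Prop :=
  forall (d1 d2 d3' d4 d5 : bool) x1 x2 x3 x4 x5,
    homog V0 V1 d1 x1 -> homog V0 V1 d2 x2 -> homog V0 V1 d3' x3 ->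
    homog V0 V1 d4 x4 -> homog V0 V1 d5 x5 ->
    d3 delta br psi false d1 d2 d3' d4 d5 x1 x2 x3 x4 x5 = 0.

End Defs.

From HB Require Import structures.
From mathcomp Require Import all_boot all_order all_algebra.
From mathcomp Require Import boolp functions zify.

(* Series in T[[lambda]] are coefficient sequences, and [.,.,.]_lambda is
   additive in each argument and lambda-adically continuous: the n-th
   coefficient of a product only involves coefficients of index at most n.
   Hence an identity holds for all homogeneous series as soon as it holds for
   homogeneous monomials lambda^i x.  On monomials
     [lambda^i x, lambda^j y, lambda^k z]_lambda
       = lambda^(i+j+k) ([x, y, z] + lambda psi(x, y, z)),
   so each identity of T_lambda becomes a polynomial identity in lambda whose
   extreme coefficients are the same identity for [.,.,.] and for psi.  Only
   the fundamental identity has a middle coefficient, and by the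
   skew-symmetry of [.,.,.] it is exactly d^3 psi = 0. *)

Set Implicit Arguments. Unset Strict Implicit. Unset Printing Implicit Defensive.
Import Order.TTheory GRing.Theory Num.Theory.
Local Open Scope ring_scope.

Section Trilinear.
Variables (K : fieldType) (V : lmodType K) (f : V -> V -> V -> V).
Hypothesis f_tri : trilinear f.

Lemma triDl x x' y z : f (x + x') y z = f x y z + f x' y z.
Proof. by move: f_tri => [fZD _ _]; rewrite -[x]scale1r fZD !scale1r. Qed.
Lemma triDm x y y' z : f x (y + y') z = f x y z + f x y' z.
Proof. by move: f_tri => [_ fZD _]; rewrite -[y]scale1r fZD !scale1r. Qed.
Lemma triDr x y z z' : f x y (z + z') = f x y z + f x y z'.
Proof. by move: f_tri => [_ _ fZD]; rewrite -[z]scale1r fZD !scale1r. Qed.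

Lemma tri0l y z : f 0 y z = 0.
Proof. by apply: (addrI (f 0 y z)); rewrite -triDl !addr0. Qed.
Lemma tri0m x z : f x 0 z = 0.
Proof. by apply: (addrI (f x 0 z)); rewrite -triDm !addr0. Qed.
Lemma tri0r x y : f x y 0 = 0.
Proof. by apply: (addrI (f x y 0)); rewrite -triDr !addr0. Qed.

End Trilinear.

Section Signs.
Variable R : pzRingType.

Lemma sgn_false : sgn R false = 1.
Proof. exact: expr0. Qed.
Lemma sgn_addb a b : sgn R (a (+) b) = sgn R a * sgn R b.
Proof. by case: a; case: b; rewrite /sgn /= ?expr0 ?expr1 ?mulr1 ?mul1r ?mulrNN ?mulr1. Qed.
Lemma sgn_sqr a : sgn R a * sgn R a = 1.
Proof. by rewrite -sgn_addb addbb sgn_false. Qed.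

End Signs.

(* A series [p : nat -> V] stands for [\sum_n p n lambda^n]: [mono i x] is
   [lambda^i x], [poly2 s a b] is [lambda^s (a + lambda b)], and so on. *)
Section Series.
Variable V : zmodType.

Definition mono (i : nat) (x : V) : nat -> V := fun m => if m == i then x else 0.

Lemma monoD i x y : mono i (x + y) = mono i x + mono i y.
Proof. by apply/funext => m; rewrite fctE /mono; case: eqP; rewrite ?addr0. Qed.
Lemma mono0 i : mono i 0 = 0.
Proof. by apply/funext => m; rewrite /mono; case: eqP. Qed.

Definition poly2 (s : nat) (a b : V) : nat -> V := mono s a + mono s.+1 b.
Definition poly3 (s : nat) (a b c : V) : nat -> V :=
  mono s a + mono s.+1 b + mono s.+2 c.

Lemma poly2D s a b a' b' : poly2 s a b + poly2 s a' b' = poly2 s (a + a') (b + b').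
Proof. by rewrite /poly2 addrACA -!monoD. Qed.
Lemma poly3D s a b c a' b' c' :
  poly3 s a b c + poly3 s a' b' c' = poly3 s (a + a') (b + b') (c + c').
Proof. by rewrite /poly3 addrACA (addrACA (mono s a)) -!monoD. Qed.
Lemma poly20 s : poly2 s 0 0 = 0.
Proof. by rewrite /poly2 !mono0 addr0. Qed.

Lemma poly2_shift s a b c d : poly2 s a b + poly2 s.+1 c d = poly3 s a (b + c) d.
Proof. by rewrite /poly2 /poly3 monoD !addrA. Qed.

Lemma poly2_eq s a b a' b' : poly2 s a b = poly2 s a' b' <-> a = a' /\ b = b'.
Proof.
split=> [E|[-> ->]] //; have coef m := congr1 (fun p => p m) E.
move: (coef s) (coef s.+1); rewrite /poly2 !fctE /mono !eqxx.
by rewrite (ltn_eqF (ltnSn s)) (gtn_eqF (ltnSn s)) !addr0 !add0r.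
Qed.

Lemma poly3_eq s a b c a' b' c' :
  poly3 s a b c = poly3 s a' b' c' <-> [/\ a = a', b = b' & c = c'].
Proof.
split=> [E|[-> -> ->]] //; have coef m := congr1 (fun p => p m) E.
move: (coef s) (coef s.+1) (coef s.+2); rewrite /poly3 !fctE /mono !eqxx !eqSS.
rewrite (ltn_eqF (ltnSn s)) (gtn_eqF (ltnSn s)).
by rewrite (ltn_eqF (ltnW (ltnSn s.+1))) (gtn_eqF (ltnW (ltnSn s.+1))) !addr0 !add0r.
Qed.

Definition eq_upto (n : nat) (p q : nat -> V) : Prop :=
  forall m, (m <= n)%N -> p m = q m.

Lemma eq_upto_le m n p q : (m <= n)%N -> eq_upto n p q -> eq_upto m p q.
Proof. by move=> mn pq l lm; apply: pq; apply: leq_trans lm mn. Qed.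

Lemma eq_upto_truncation n p : eq_upto n p (\sum_(i < n.+1) mono i (p i)).
Proof.
move=> m mn; rewrite fct_sumE /mono.
under eq_bigr => i _ do rewrite eq_sym.
by rewrite -big_mkcond big_ord1_eq ltnS mn.
Qed.

Definition causal_additive (F : (nat -> V) -> nat -> V) : Prop :=
  {morph F : p q / p + q} /\ forall n p q, eq_upto n p q -> F p n = F q n.

Lemma causal_additive_id : causal_additive id.
Proof. by split=> // n p q; apply. Qed.
Lemma causal_additive0 : causal_additive (fun=> 0).
Proof. by split=> // p q; rewrite addr0. Qed.
Lemma causal_additiveD F G : causal_additive F -> causal_additive G ->
  causal_additive (fun p => F p + G p).
Proof.
move=> [FD Fc] [GD Gc]; split=> [p q|n p q pq]; first by rewrite FD GD addrACA.
by rewrite !addrfctE /= (Fc _ _ _ pq) (Gc _ _ _ pq).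
Qed.

Lemma causal_additive_eq_upto F n p q : causal_additive F ->
  eq_upto n p q -> eq_upto n (F p) (F q).
Proof. by move=> [_ Fc] pq m mn; apply: Fc; apply: eq_upto_le pq. Qed.

Lemma causal_additive_monomial_ext (P : V -> Prop) F G :
  causal_additive F -> causal_additive G ->
  (forall i x, P x -> F (mono i x) = G (mono i x)) ->
  forall p, (forall m, P (p m)) -> F p = G p.
Proof.
move=> [FD Fc] [GD Gc] FG p Pp; apply/funext => n.
have F0 : F 0 = 0 by apply: (addrI (F 0)); rewrite -FD !addr0.
have G0 : G 0 = 0 by apply: (addrI (G 0)); rewrite -GD !addr0.
have pt := @eq_upto_truncation n p.
rewrite (Fc _ _ _ pt) (Gc _ _ _ pt) (big_morph F FD F0) (big_morph G GD G0).
by congr (_ n); apply: eq_bigr => i _; apply: FG.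
Qed.

End Series.

Section ScaledSeries.
Variables (R : pzRingType) (V : lmodType R).

Lemma monoZ i (k : R) (x : V) : mono i (k *: x) = k *: mono i x.
Proof. by apply/funext => m; rewrite fctE /mono; case: eqP; rewrite ?scaler0. Qed.

Lemma poly2Z s (k : R) (a b : V) : k *: poly2 s a b = poly2 s (k *: a) (k *: b).
Proof. by rewrite /poly2 scalerDr -!monoZ. Qed.
Lemma poly3Z s (k : R) (a b c : V) :
  k *: poly3 s a b c = poly3 s (k *: a) (k *: b) (k *: c).
Proof. by rewrite /poly3 !scalerDr -!monoZ. Qed.

Lemma causal_additiveZ (k : R) (F : (nat -> V) -> nat -> V) : causal_additive F ->
  causal_additive (fun p => k *: F p).
Proof.
move=> [FD Fc]; split=> [p q|n p q pq]; first by rewrite FD scalerDr.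
by rewrite !scalrfctE /= (Fc _ _ _ pq).
Qed.

End ScaledSeries.

Section FundamentalIdentity.
Variables (R : pzRingType) (W : lmodType R).

Definition fundamental_lhs (f g : W -> W -> W -> W) (x1 x2 x3 x4 x5 : W) : W :=
  f x1 x2 (g x3 x4 x5).
Definition fundamental_rhs (f g : W -> W -> W -> W) (c1 c2 : R)
    (x1 x2 x3 x4 x5 : W) : W :=
  f (g x1 x2 x3) x4 x5 + c1 *: f x3 (g x1 x2 x4) x5 + c2 *: f x3 x4 (g x1 x2 x5).

Lemma fundamental_rhsD f g f' g' c1 c2 x1 x2 x3 x4 x5 :
  fundamental_rhs f g c1 c2 x1 x2 x3 x4 x5 + fundamental_rhs f' g' c1 c2 x1 x2 x3 x4 x5 =
    (f (g x1 x2 x3) x4 x5 + f' (g' x1 x2 x3) x4 x5)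
    + c1 *: (f x3 (g x1 x2 x4) x5 + f' x3 (g' x1 x2 x4) x5)
    + c2 *: (f x3 x4 (g x1 x2 x5) + f' x3 x4 (g' x1 x2 x5)).
Proof. by rewrite /fundamental_rhs addrACA (addrACA (f _ _ _)) -!scalerDr. Qed.

End FundamentalIdentity.

Section Extension.
Variables (K : fieldType) (V : lmodType K) (f : V -> V -> V -> V).
Hypothesis f_tri : trilinear f.

Lemma ext3Dl p p' q r n : ext3 f (p + p') q r n = ext3 f p q r n + ext3 f p' q r n.
Proof.
rewrite /ext3 -big_split; apply: eq_bigr => i _; rewrite -big_split.
by apply: eq_bigr => j _; rewrite fctE triDl.
Qed.
Lemma ext3Dm p q q' r n : ext3 f p (q + q') r n = ext3 f p q r n + ext3 f p q' r n.
Proof.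
rewrite /ext3 -big_split; apply: eq_bigr => i _; rewrite -big_split.
by apply: eq_bigr => j _; rewrite fctE triDm.
Qed.
Lemma ext3Dr p q r r' n : ext3 f p q (r + r') n = ext3 f p q r n + ext3 f p q r' n.
Proof.
rewrite /ext3 -big_split; apply: eq_bigr => i _; rewrite -big_split.
by apply: eq_bigr => j _; rewrite fctE triDr.
Qed.

Lemma ext3_eq_upto p p' q q' r r' n : eq_upto n p p' -> eq_upto n q q' ->
  eq_upto n r r' -> ext3 f p q r n = ext3 f p' q' r' n.
Proof.
move=> pp qq rr; apply: eq_bigr => i _; apply: eq_bigr => j _.
have := ltn_ord i; have := ltn_ord j => ltj lti.
by rewrite pp ?qq ?rr //; lia.
Qed.

Lemma tri_mono i j k x y z a b c :
  f (mono i x a) (mono j y b) (mono k z c) =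
  if [&& b == j, a == i & c == k] then f x y z else 0.
Proof.
rewrite /mono; case: (b == j); last exact: tri0m.
by case: (a == i); [case: (c == k); [|exact: tri0r] | exact: tri0l].
Qed.

Lemma ext3_mono i j k x y z n :
  ext3 f (mono i x) (mono j y) (mono k z) n = mono (i + j + k)%N (f x y z) n.
Proof.
rewrite /ext3.
under eq_bigr => a _ do under eq_bigr => b _ do rewrite tri_mono if_and.
under eq_bigr => a _ do rewrite -big_mkcond (big_ord1_eq _
  (fun b => if (a == i :> nat) && (n - a - b == k)%N then f x y z else 0))
  -if_and andbCA if_and.
rewrite -big_mkcond (big_ord1_eq _
  (fun a => if (j < (n - a).+1)%N && (n - a - j == k)%N then f x y z else 0)).
by rewrite -if_and /mono; congr (if _ then _ else _); lia.
Qed.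

End Extension.

Section Deformation.
Variables (K : fieldType) (V : lmodType K) (br psi : V -> V -> V -> V).
Hypotheses (br_tri : trilinear br) (psi_tri : trilinear psi).
Local Notation BL := (br_lambda br psi).

Lemma br_lambdaDl p p' q r : BL (p + p') q r = BL p q r + BL p' q r.
Proof.
apply/funext => -[|n]; rewrite /br_lambda [in RHS]addrfctE /= ext3Dl //.
  by rewrite !addr0.
by rewrite ext3Dl // addrACA.
Qed.
Lemma br_lambdaDm p q q' r : BL p (q + q') r = BL p q r + BL p q' r.
Proof.
apply/funext => -[|n]; rewrite /br_lambda [in RHS]addrfctE /= ext3Dm //.
  by rewrite !addr0.
by rewrite ext3Dm // addrACA.
Qed.
Lemma br_lambdaDr p q r r' : BL p q (r + r') = BL p q r + BL p q r'.
Proof.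
apply/funext => -[|n]; rewrite /br_lambda [in RHS]addrfctE /= ext3Dr //.
  by rewrite !addr0.
by rewrite ext3Dr // addrACA.
Qed.

Lemma br_lambda_eq_upto p p' q q' r r' n : eq_upto n p p' -> eq_upto n q q' ->
  eq_upto n r r' -> BL p q r n = BL p' q' r' n.
Proof.
move=> pp qq rr; rewrite /br_lambda (ext3_eq_upto br pp qq rr).
case: n pp qq rr => [|n] pp qq rr //; have le_n := leqnSn n.
by rewrite (ext3_eq_upto psi (eq_upto_le le_n pp) (eq_upto_le le_n qq)
  (eq_upto_le le_n rr)).
Qed.

Lemma causal_additive_br_lambdal F q r : causal_additive F ->
  causal_additive (fun p => BL (F p) q r).
Proof.
move=> cF; have [FD _] := cF; split=> [p p'|n p p' pp]; first by rewrite FD br_lambdaDl.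
by apply: br_lambda_eq_upto => //; apply: causal_additive_eq_upto.
Qed.
Lemma causal_additive_br_lambdam F p r : causal_additive F ->
  causal_additive (fun q => BL p (F q) r).
Proof.
move=> cF; have [FD _] := cF; split=> [q q'|n q q' qq]; first by rewrite FD br_lambdaDm.
by apply: br_lambda_eq_upto => //; apply: causal_additive_eq_upto.
Qed.
Lemma causal_additive_br_lambdar F p q : causal_additive F ->
  causal_additive (fun r => BL p q (F r)).
Proof.
move=> cF; have [FD _] := cF; split=> [r r'|n r r' rr]; first by rewrite FD br_lambdaDr.
by apply: br_lambda_eq_upto => //; apply: causal_additive_eq_upto.
Qed.

Lemma br_lambda_mono i j k x y z :
  BL (mono i x) (mono j y) (mono k z) = poly2 (i + j + k)%N (br x y z) (psi x y z).
Proof.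
by apply/funext => -[|n]; rewrite /br_lambda /poly2 fctE !ext3_mono // /mono eqSS.
Qed.

Lemma br_lambda_poly2l i j k a b y z :
  BL (poly2 i a b) (mono j y) (mono k z) =
  poly3 (i + j + k)%N (br a y z) (psi a y z + br b y z) (psi b y z).
Proof. by rewrite {1}/poly2 br_lambdaDl !br_lambda_mono !addSn poly2_shift. Qed.
Lemma br_lambda_poly2m i j k x a b z :
  BL (mono i x) (poly2 j a b) (mono k z) =
  poly3 (i + j + k)%N (br x a z) (psi x a z + br x b z) (psi x b z).
Proof. by rewrite {1}/poly2 br_lambdaDm !br_lambda_mono addnS addSn poly2_shift. Qed.
Lemma br_lambda_poly2r i j k x y a b :
  BL (mono i x) (mono j y) (poly2 k a b) =
  poly3 (i + j + k)%N (br x y a) (psi x y a + br x y b) (psi x y b).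
Proof. by rewrite {1}/poly2 br_lambdaDr !br_lambda_mono addnS poly2_shift. Qed.

Lemma br_lambda_skew_monoE (c : K) i j k x y z :
  BL (mono j y) (mono i x) (mono k z) = c *: BL (mono i x) (mono j y) (mono k z) <->
  br y x z = c *: br x y z /\ psi y x z = c *: psi x y z.
Proof. by rewrite !br_lambda_mono // (addnC j) poly2Z; apply: poly2_eq. Qed.

Lemma br_lambda_jacobi_monoE (c1 c2 c3 : K) i j k x y z :
  c1 *: BL (mono i x) (mono j y) (mono k z) + c2 *: BL (mono j y) (mono k z) (mono i x)
    + c3 *: BL (mono k z) (mono i x) (mono j y) = 0 <->
  c1 *: br x y z + c2 *: br y z x + c3 *: br z x y = 0 /\
  c1 *: psi x y z + c2 *: psi y z x + c3 *: psi z x y = 0.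
Proof.
rewrite !br_lambda_mono //.
have -> : (j + k + i = i + j + k)%N by lia.
have -> : (k + i + j = i + j + k)%N by lia.
by rewrite !poly2Z !poly2D -(poly20 _ (i + j + k)); apply: poly2_eq.
Qed.

Lemma br_lambda_fundamental_monoE (c1 c2 : K) i j k l m x1 x2 x3 x4 x5 :
  fundamental_lhs BL BL (mono i x1) (mono j x2) (mono k x3) (mono l x4) (mono m x5) =
    fundamental_rhs BL BL c1 c2 (mono i x1) (mono j x2) (mono k x3) (mono l x4)
      (mono m x5) <->
  [/\ fundamental_lhs br br x1 x2 x3 x4 x5 = fundamental_rhs br br c1 c2 x1 x2 x3 x4 x5,
      fundamental_lhs psi br x1 x2 x3 x4 x5 + fundamental_lhs br psi x1 x2 x3 x4 x5 =
        fundamental_rhs psi br c1 c2 x1 x2 x3 x4 x5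
        + fundamental_rhs br psi c1 c2 x1 x2 x3 x4 x5
    & fundamental_lhs psi psi x1 x2 x3 x4 x5 = fundamental_rhs psi psi c1 c2 x1 x2 x3 x4 x5].
Proof.
rewrite fundamental_rhsD /fundamental_lhs /fundamental_rhs !br_lambda_mono //.
rewrite !br_lambda_poly2r // br_lambda_poly2l // br_lambda_poly2m //.
have -> : (i + j + (k + l + m) = i + j + k + l + m)%N by lia.
have -> : (k + (i + j + l) + m = i + j + k + l + m)%N by lia.
have -> : (k + l + (i + j + m) = i + j + k + l + m)%N by lia.
by rewrite !poly3Z !poly3D; apply: poly3_eq.
Qed.

End Deformation.

Ltac causal_additive_closure :=
  repeat first [ apply: causal_additive_br_lambdal | apply: causal_additive_br_lambdam
               | apply: causal_additive_br_lambdar | apply: causal_additiveD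
               | apply: causal_additiveZ | apply: causal_additive0
               | apply: causal_additive_id | assumption ].

Ltac reduce_to_monomials p hp :=
  move: p hp; apply: causal_additive_monomial_ext;
  [causal_additive_closure | causal_additive_closure |].

Section Grading.
Variables (K : fieldType) (V : lmodType K) (V0 V1 : {pred V}) (delta : K).
Variables (br psi : V -> V -> V -> V).
Hypotheses (grading : Z2grading V0 V1) (br_tri : trilinear br) (psi_tri : trilinear psi).
Hypothesis psi_even : even_map V0 V1 psi.
Hypothesis delta_sqr : delta * delta = 1.
Hypothesis br_jlsts : jlsts_identities (homog V0 V1) delta br.
Local Notation BL := (br_lambda br psi).

Lemma homog0 d : homog V0 V1 d 0.
Proof. by case: grading => [[V00 _] [V10 _] _ _]; case: d. Qed.

Lemma homogD d x y : homog V0 V1 d x -> homog V0 V1 d y -> homog V0 V1 d (x + y).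
Proof.
case: grading => [[_ V0D] [_ V1D] _ _] hx hy; rewrite -[x]scale1r.
by case: d hx hy => hx hy; [exact: V1D | exact: V0D].
Qed.

Lemma homog_lambda_mono d i x : homog V0 V1 d x -> homog_lambda V0 V1 d (mono i x).
Proof. by move=> hx m; rewrite /mono; case: eqP => _ //; apply: homog0. Qed.

Lemma homog_ext3 (f : V -> V -> V -> V) da db dc d p q r n :
  (forall x y z, homog V0 V1 da x -> homog V0 V1 db y -> homog V0 V1 dc z ->
     homog V0 V1 d (f x y z)) ->
  homog_lambda V0 V1 da p -> homog_lambda V0 V1 db q -> homog_lambda V0 V1 dc r ->
  homog V0 V1 d (ext3 f p q r n).
Proof.
move=> fh hp hq hr; apply: big_ind => [||i _]; [exact: homog0 | exact: homogD |].
by apply: big_ind => [||j _]; [exact: homog0 | exact: homogD | exact: fh].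
Qed.

Lemma homog_br_lambda da db dc p q r :
  (forall x y z, homog V0 V1 da x -> homog V0 V1 db y -> homog V0 V1 dc z ->
     homog V0 V1 (da (+) db (+) dc) (br x y z)) ->
  homog_lambda V0 V1 da p -> homog_lambda V0 V1 db q -> homog_lambda V0 V1 dc r ->
  homog_lambda V0 V1 (da (+) db (+) dc) (BL p q r).
Proof.
move=> br_hom hp hq hr [|n]; apply: homogD; try exact: homog_ext3 hp hq hr.
  exact: homog0.
by apply: homog_ext3 hp hq hr => x y z; apply: psi_even.
Qed.

(* The skew-symmetry of br turns the theta(x3, x5) term of d^3 psi into
   [x3, psi(x1, x2, x4), x5]. *)
Lemma d3_psiE d1 d2 d3' d4 d5 x1 x2 x3 x4 x5 :
  homog V0 V1 d1 x1 -> homog V0 V1 d2 x2 -> homog V0 V1 d3' x3 ->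
  homog V0 V1 d4 x4 -> homog V0 V1 d5 x5 ->
  let c1 := sgn K (d3' && (d1 (+) d2)) in
  let c2 := delta * sgn K ((d1 (+) d2) && (d3' (+) d4)) in
  d3 delta br psi false d1 d2 d3' d4 d5 x1 x2 x3 x4 x5 =
    fundamental_rhs psi br c1 c2 x1 x2 x3 x4 x5
    + fundamental_rhs br psi c1 c2 x1 x2 x3 x4 x5
    - (fundamental_lhs psi br x1 x2 x3 x4 x5 + fundamental_lhs br psi x1 x2 x3 x4 x5).
Proof.
move=> h1 h2 h3 h4 h5 c1 c2; have [_ [br_skew _]] := br_jlsts.
rewrite fundamental_rhsD /fundamental_lhs /c1 /c2.
rewrite (br_skew _ _ _ _ _ _ (psi_even h1 h2 h4) h3 h5).
rewrite /d3 /theta /Dop /= sgn_false !scalerA sgn_sqr scale1r mulr1 delta_sqr scale1r.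
have sgnE : sgn K (d3' && (d1 (+) d2)) * (delta * sgn K ((d1 (+) d2 (+) d4) && d3')) =
    delta * sgn K ((d1 (+) d2) && (d3' (+) d5) (+) d4 && d5) *
    sgn K ((d1 (+) d2 (+) d4) && (d3' (+) d5)).
  rewrite mulrCA -!mulrA -!sgn_addb; congr (_ * sgn K _).
  by case: d1 d2 d3' d4 d5 {h1 h2 h3 h4 h5 c1 c2} => [] [] [] [] [].
rewrite !scalerDr scalerA mulrN scaleNr sgnE [sgn K _ * delta]mulrC !opprD !addrA.
by rewrite [LHS](ACl (5*1*7*2*8*4*6*3))%AC.
Qed.

Lemma cocycle3E : cocycle3 V0 V1 delta br psi <->
  forall (d1 d2 d3' d4 d5 : bool) x1 x2 x3 x4 x5,
    homog V0 V1 d1 x1 -> homog V0 V1 d2 x2 -> homog V0 V1 d3' x3 ->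
    homog V0 V1 d4 x4 -> homog V0 V1 d5 x5 ->
    let c1 := sgn K (d3' && (d1 (+) d2)) in
    let c2 := delta * sgn K ((d1 (+) d2) && (d3' (+) d4)) in
    fundamental_lhs psi br x1 x2 x3 x4 x5 + fundamental_lhs br psi x1 x2 x3 x4 x5 =
      fundamental_rhs psi br c1 c2 x1 x2 x3 x4 x5
      + fundamental_rhs br psi c1 c2 x1 x2 x3 x4 x5.
Proof.
split=> cocycle d1 d2 d3' d4 d5 x1 x2 x3 x4 x5 h1 h2 h3 h4 h5.
  apply/esym/eqP; rewrite -subr_eq0 -(d3_psiE h1 h2 h3 h4 h5).
  by rewrite (cocycle _ _ _ _ _ _ _ _ _ _ h1 h2 h3 h4 h5).
by rewrite (d3_psiE h1 h2 h3 h4 h5) (cocycle _ _ _ _ _ _ _ _ _ _ h1 h2 h3 h4 h5) subrr.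
Qed.

Section Backward.
Hypothesis psi_jlsts : jlsts_identities (homog V0 V1) delta psi.
Hypothesis cocycle : cocycle3 V0 V1 delta br psi.

Lemma br_lambda_skew da db dc p q r :
  homog_lambda V0 V1 da p -> homog_lambda V0 V1 db q -> homog_lambda V0 V1 dc r ->
  BL q p r = - (delta * sgn K (da && db)) *: BL p q r.
Proof.
move=> hp hq hr; have [_ [br_skew _]] := br_jlsts; have [_ [psi_skew _]] := psi_jlsts.
reduce_to_monomials r hr; move=> k z hz.
reduce_to_monomials q hq; move=> j y hy.
reduce_to_monomials p hp; move=> i x hx.
by apply/br_lambda_skew_monoE => //; split; [exact: br_skew hx hy hz | exact: psi_skew hx hy hz].
Qed.

Lemma br_lambda_jacobi da db dc p q r :
  homog_lambda V0 V1 da p -> homog_lambda V0 V1 db q -> homog_lambda V0 V1 dc r ->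
  sgn K (da && dc) *: BL p q r + sgn K (db && da) *: BL q r p
    + sgn K (dc && db) *: BL r p q = 0.
Proof.
move=> hp hq hr; have [_ [_ [br_jac _]]] := br_jlsts.
have [_ [_ [psi_jac _]]] := psi_jlsts.
reduce_to_monomials r hr; move=> k z hz.
reduce_to_monomials q hq; move=> j y hy.
reduce_to_monomials p hp; move=> i x hx.
by apply/br_lambda_jacobi_monoE => //; split; [exact: br_jac hx hy hz | exact: psi_jac hx hy hz].
Qed.

Lemma br_lambda_fundamental da db dc dd de p q u v w :
  homog_lambda V0 V1 da p -> homog_lambda V0 V1 db q -> homog_lambda V0 V1 dc u ->
  homog_lambda V0 V1 dd v -> homog_lambda V0 V1 de w ->
  BL p q (BL u v w) =
    BL (BL p q u) v w
    + sgn K (dc && (da (+) db)) *: BL u (BL p q v) w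
    + (delta * sgn K ((da (+) db) && (dc (+) dd))) *: BL u v (BL p q w).
Proof.
move=> hp hq hu hv hw; have [_ [_ [_ br_fund]]] := br_jlsts.
have [_ [_ [_ psi_fund]]] := psi_jlsts.
reduce_to_monomials w hw; move=> m x5 h5.
reduce_to_monomials v hv; move=> l x4 h4.
reduce_to_monomials u hu; move=> k x3 h3.
reduce_to_monomials q hq; move=> j x2 h2.
reduce_to_monomials p hp; move=> i x1 h1.
apply/br_lambda_fundamental_monoE => //; split.
- exact: br_fund h1 h2 h3 h4 h5.
- exact: (cocycle3E.1 cocycle _ _ _ _ _ _ _ _ _ _ h1 h2 h3 h4 h5).
- exact: psi_fund h1 h2 h3 h4 h5.
Qed.

Lemma br_lambda_jlsts : jlsts_identities (homog_lambda V0 V1) delta BL.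
Proof.
have [br_hom _] := br_jlsts.
split=> [da db dc p q r|]; first by apply: homog_br_lambda => // x y z; apply: br_hom.
split; [exact: br_lambda_skew | split; [exact: br_lambda_jacobi | exact: br_lambda_fundamental]].
Qed.

End Backward.

Section Forward.
Hypothesis lambda_jlsts : jlsts_identities (homog_lambda V0 V1) delta BL.

Lemma jlsts_of_br_lambda : jlsts_identities (homog V0 V1) delta psi.
Proof.
have [_ [skew [jac fund]]] := lambda_jlsts; have cst := homog_lambda_mono 0.
split; first exact: psi_even.
split=> [da db dc a b c ha hb hc|]; last split=> [da db dc a b c ha hb hc|].
- exact: ((br_lambda_skew_monoE br_tri psi_tri _ 0 0 0 a b c).1
    (skew _ _ _ _ _ _ (cst _ _ ha) (cst _ _ hb) (cst _ _ hc))).2.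
- exact: ((br_lambda_jacobi_monoE br_tri psi_tri _ _ _ 0 0 0 a b c).1
    (jac _ _ _ _ _ _ (cst _ _ ha) (cst _ _ hb) (cst _ _ hc))).2.
move=> d1 d2 d3' d4 d5 x1 x2 x3 x4 x5 h1 h2 h3 h4 h5.
have [_ _ //] := (br_lambda_fundamental_monoE br_tri psi_tri _ _ 0 0 0 0 0 x1 x2 x3 x4 x5).1
  (fund _ _ _ _ _ _ _ _ _ _ (cst _ _ h1) (cst _ _ h2) (cst _ _ h3) (cst _ _ h4) (cst _ _ h5)).
Qed.

Lemma cocycle3_of_br_lambda : cocycle3 V0 V1 delta br psi.
Proof.
have [_ [_ [_ fund]]] := lambda_jlsts; have cst := homog_lambda_mono 0.
apply/cocycle3E => d1 d2 d3' d4 d5 x1 x2 x3 x4 x5 h1 h2 h3 h4 h5.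
have [_ mixed _] := (br_lambda_fundamental_monoE br_tri psi_tri _ _ 0 0 0 0 0 x1 x2 x3 x4 x5).1
  (fund _ _ _ _ _ _ _ _ _ _ (cst _ _ h1) (cst _ _ h2) (cst _ _ h3) (cst _ _ h4) (cst _ _ h5)).
exact: mixed.
Qed.

End Forward.

End Grading.

Theorem theorem5p1 (K : fieldType) (V : lmodType K) (V0 V1 : {pred V})
    (delta : K) (br psi : V -> V -> V -> V) :
  Z2grading V0 V1 ->
  (delta = 1 \/ delta = -1) ->
  is_JLSTS V0 V1 delta br ->
  trilinear psi -> even_map V0 V1 psi ->
  (jlsts_identities (homog_lambda V0 V1) delta (br_lambda br psi)
   <-> is_JLSTS V0 V1 delta psi /\ cocycle3 V0 V1 delta br psi).
Proof.
move=> grading delta_pm1 [br_tri br_jlsts] psi_tri psi_even.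
have delta_sqr : delta * delta = 1 by case: delta_pm1 => ->; rewrite ?mulr1 ?mulrNN ?mulr1.
split=> [lambda_jlsts | [[_ psi_jlsts] cocycle]].
  split; first split=> //.
  - exact: jlsts_of_br_lambda grading br_tri psi_tri psi_even lambda_jlsts.
  - exact: cocycle3_of_br_lambda grading br_tri psi_tri psi_even delta_sqr br_jlsts
      lambda_jlsts.
exact: br_lambda_jlsts grading br_tri psi_tri psi_even delta_sqr br_jlsts psi_jlsts cocycle.
Qed.
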